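(* Let $\alpha\ge-1$ and $A\subseteq\mathbb{N}$. Then the set of all cluster points of the sequence $\left(\frac{A_\alpha(n)}{\mathbb{N}_\alpha(n)}\right)_{n\ge1}$ is the whole interval $[\underline{d}_\alpha(A),\overline{d}_\alpha(A)]$.
   Context: $\mathbb{N}=\{1,2,3,\dots\}$. For $\alpha\ge-1$ and $A\subseteq\mathbb{N}$ put $A_\alpha(n)=\sum_{k=1}^n\chi_A(k)k^\alpha$ (so $\mathbb{N}_\alpha(n)=\sum_{k=1}^nk^\alpha$), $\underline{d}_\alpha(A)=\liminf_{n\to\infty}\frac{A_\alpha(n)}{\mathbb{N}_\alpha(n)}$ and $\overline{d}_\alpha(A)=\limsup_{n\to\infty}\frac{A_\alpha(n)}{\mathbb{N}_\alpha(n)}$. *)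

From Stdlib Require Import Reals.
From Coquelicot Require Import Coquelicot.
Open Scope R_scope.

(* A subset A of N = {1,2,...} is given by its characteristic function
   A : nat -> bool (only values at k >= 1 matter). *)

Fixpoint Asum (A : nat -> bool) (alpha : R) (n : nat) : R :=
  match n with
  | O => 0
  | S m => Asum A alpha m + (if A (S m) then Rpower (INR (S m)) alpha else 0)
  end.

Definition Nsum (alpha : R) (n : nat) : R := Asum (fun _ => true) alpha n.

Definition dratio (A : nat -> bool) (alpha : R) (n : nat) : R :=
  Asum A alpha n / Nsum alpha n.

(* lower / upper alpha-densities: liminf / limsup over n >= 1
   (the sequence is reindexed n |-> n+1 so that it starts at n = 1) *)
Definition lower_d (alpha : R) (A : nat -> bool) : Rbar :=
  LimInf_seq (fun n => dratio A alpha (S n)).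
Definition upper_d (alpha : R) (A : nat -> bool) : Rbar :=
  LimSup_seq (fun n => dratio A alpha (S n)).

Definition cluster_point (u : nat -> R) (x : R) : Prop :=
  forall eps : R, 0 < eps -> forall N : nat, exists n : nat, (N <= n)%nat /\ Rabs (u n - x) < eps.

(* The ratios u_n = A_alpha(n) / N_alpha(n) move by at most n^alpha / N_alpha(n) from one
   index to the next, and this bound tends to 0 (N_alpha(n) is at least of order n * n^alpha
   up to a constant).  A real sequence with vanishing steps cannot jump over a level x lying
   between its lim inf and its lim sup: it comes within any eps of x infinitely often.
   Conversely every cluster point lies between lim inf and lim sup for any sequence. *)

From Stdlib Require Import Reals Lra Lia.
From Coquelicot Require Import Coquelicot.
Open Scope R_scope.

Lemma LimInf_seq_correct (u : nat -> R) : is_LimInf_seq u (LimInf_seq u).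
Proof.
  destruct (ex_LimInf_seq u) as [l Hl]. now rewrite (is_LimInf_seq_unique _ _ Hl).
Qed.

Lemma cluster_point_opp (u : nat -> R) (x : R) :
  cluster_point u x -> cluster_point (fun n => - u n) (- x).
Proof.
  intros Hc eps Heps N. destruct (Hc eps Heps N) as [n [Hn Hu]].
  exists n. split; [exact Hn|].
  replace (- u n - - x) with (- (u n - x)) by ring. now rewrite Rabs_Ropp.
Qed.

Lemma LimInf_seq_le_cluster_point (u : nat -> R) (x : R) :
  cluster_point u x -> Rbar_le (LimInf_seq u) x.
Proof.
  intros Hc. pose proof (LimInf_seq_correct u) as Hl.
  destruct (LimInf_seq u) as [l| |]; simpl in *; [| |exact I].
  - apply Rnot_lt_le. intros Hxl.
    assert (Heps : 0 < (l - x) / 2) by lra.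
    destruct (Hl (mkposreal _ Heps)) as [_ [N HN]]. simpl in HN.
    destruct (Hc _ Heps N) as [n [Hn Hu]]. specialize (HN n Hn).
    apply Rabs_def2 in Hu. lra.
  - destruct (Hl (x + 1)) as [N HN].
    destruct (Hc 1 Rlt_0_1 N) as [n [Hn Hu]]. specialize (HN n Hn).
    apply Rabs_def2 in Hu. lra.
Qed.

Lemma cluster_point_le_LimSup_seq (u : nat -> R) (x : R) :
  cluster_point u x -> Rbar_le x (LimSup_seq u).
Proof.
  intros Hc. apply Rbar_opp_le. rewrite <- LimInf_seq_opp.
  exact (LimInf_seq_le_cluster_point _ _ (cluster_point_opp u x Hc)).
Qed.

Lemma LimInf_seq_le_frequently_lt (u : nat -> R) (x eps : R) :
  Rbar_le (LimInf_seq u) x -> 0 < eps ->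
  forall N, exists n, (N <= n)%nat /\ u n < x + eps.
Proof.
  intros Hx Heps N. pose proof (LimInf_seq_correct u) as Hl.
  destruct (LimInf_seq u) as [l| |]; simpl in *; [|contradiction|apply Hl].
  destruct (Hl (mkposreal _ Heps)) as [Hfreq _].
  destruct (Hfreq N) as [n [Hn Hu]]. simpl in Hu.
  exists n. split; [exact Hn | lra].
Qed.

Lemma le_LimSup_seq_frequently_gt (u : nat -> R) (x eps : R) :
  Rbar_le x (LimSup_seq u) -> 0 < eps ->
  forall N, exists n, (N <= n)%nat /\ x - eps < u n.
Proof.
  intros Hx Heps N.
  assert (Hx' : Rbar_le (LimInf_seq (fun n => - u n)) (- x)).
  { rewrite LimInf_seq_opp. change (Finite (- x)) with (Rbar_opp x).
    now apply Rbar_opp_le. }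
  destruct (LimInf_seq_le_frequently_lt _ _ _ Hx' Heps N) as [n [Hn Hu]].
  exists n. split; [exact Hn | lra].
Qed.

Lemma seq_up_crossing (u : nat -> R) (x : R) (m n : nat) :
  (m <= n)%nat -> u m <= x < u n ->
  exists k, (m <= k < n)%nat /\ u k <= x < u (S k).
Proof.
  intros Hmn Hx. induction n as [|n IH].
  - assert (m = 0%nat) by lia. subst. lra.
  - destruct (Nat.eq_dec m (S n)) as [->|Hm]; [lra|].
    destruct (Rle_dec (u n) x) as [Hun|Hun].
    + exists n. split; [lia | lra].
    + destruct (IH ltac:(lia) ltac:(lra)) as [k [Hk Hu]].
      exists k. split; [lia | exact Hu].
Qed.

Lemma cluster_point_of_vanishing_steps (u : nat -> R) (x : R) :
  is_lim_seq (fun n => u (S n) - u n) 0 ->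
  Rbar_le (LimInf_seq u) x -> Rbar_le x (LimSup_seq u) ->
  cluster_point u x.
Proof.
  intros Hsteps Hinf Hsup eps Heps N.
  apply is_lim_seq_spec in Hsteps.
  destruct (Hsteps (mkposreal _ Heps)) as [N1 HN1]. simpl in HN1.
  destruct (LimInf_seq_le_frequently_lt u x eps Hinf Heps (Nat.max N N1))
    as [m [Hm Hum]].
  destruct (le_LimSup_seq_frequently_gt u x eps Hsup Heps m) as [n [Hn Hun]].
  destruct (Rle_dec (u m) x) as [Hm'|Hm'].
  2: { exists m. split; [lia | apply Rabs_def1; lra]. }
  destruct (Rlt_dec x (u n)) as [Hn'|Hn'].
  2: { exists n. split; [lia | apply Rabs_def1; lra]. }
  destruct (seq_up_crossing u x m n Hn (conj Hm' Hn')) as [k [Hk Huk]].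
  exists k. split; [lia|].
  specialize (HN1 k ltac:(lia)). rewrite Rminus_0_r in HN1.
  apply Rabs_def2 in HN1. apply Rabs_def1; lra.
Qed.

Lemma Rpower_pos (x a : R) : 0 < Rpower x a.
Proof. apply exp_pos. Qed.

Lemma Rle_Rpower_l_nonpos (x y a : R) : a <= 0 -> 0 < x <= y -> Rpower y a <= Rpower x a.
Proof.
  intros Ha Hxy. rewrite <- (Ropp_involutive a), (Rpower_Ropp x), (Rpower_Ropp y).
  apply Rinv_le_contravar; [apply Rpower_pos | apply Rle_Rpower_l; lra].
Qed.

Lemma Rdiv_le_Rdiv_cross (a b c d : R) :
  0 < b -> 0 < d -> a * d <= c * b -> a / b <= c / d.
Proof.
  intros Hb Hd H.
  replace (a / b) with (a * d * / (b * d)) by (field; lra).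
  replace (c / d) with (c * b * / (b * d)) by (field; lra).
  apply Rmult_le_compat_r; [|exact H].
  left. apply Rinv_0_lt_compat, Rmult_lt_0_compat; assumption.
Qed.

Lemma Rabs_ratio_step_le (P Q b c : R) :
  0 <= P <= Q -> 0 < Q -> 0 <= c <= b ->
  Rabs ((P + c) / (Q + b) - P / Q) <= b / (Q + b).
Proof.
  intros HP HQ Hc.
  assert (HQb : 0 < Q + b) by lra.
  replace ((P + c) / (Q + b) - P / Q) with ((Q * c - P * b) / (Q * (Q + b)))
    by (field; lra).
  replace (b / (Q + b)) with (Q * b / (Q * (Q + b))) by (field; lra).
  assert (HQQb : 0 < Q * (Q + b)) by nra.
  unfold Rdiv. rewrite Rabs_mult, (Rabs_right (/ _)).
  2: { left. now apply Rinv_0_lt_compat. }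
  apply Rmult_le_compat_r; [left; now apply Rinv_0_lt_compat|].
  assert (0 <= Q * c <= Q * b) by (split; [apply Rmult_le_pos | apply Rmult_le_compat_l]; lra).
  assert (0 <= P * b <= Q * b) by (split; [apply Rmult_le_pos | apply Rmult_le_compat_r]; lra).
  apply Rabs_le. lra.
Qed.

Lemma Asum_S (A : nat -> bool) (a : R) (n : nat) :
  Asum A a (S n) = Asum A a n + (if A (S n) then Rpower (INR (S n)) a else 0).
Proof. reflexivity. Qed.

Lemma Asum_nonneg (A : nat -> bool) (a : R) (n : nat) : 0 <= Asum A a n.
Proof.
  induction n as [|n IH]; [simpl; lra|]. rewrite Asum_S.
  destruct (A (S n)); pose proof (Rpower_pos (INR (S n)) a); lra.
Qed.

Lemma Asum_le_Nsum (A : nat -> bool) (a : R) (n : nat) : Asum A a n <= Nsum a n.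
Proof.
  unfold Nsum. induction n as [|n IH]; [simpl; lra|]. rewrite !Asum_S.
  destruct (A (S n)); pose proof (Rpower_pos (INR (S n)) a); lra.
Qed.

Lemma Nsum_S (a : R) (n : nat) : Nsum a (S n) = Nsum a n + Rpower (INR (S n)) a.
Proof. reflexivity. Qed.

Lemma Nsum_pos (a : R) (n : nat) : 0 < Nsum a (S n).
Proof.
  rewrite Nsum_S. pose proof (Asum_nonneg (fun _ => true) a n).
  pose proof (Rpower_pos (INR (S n)) a). unfold Nsum. lra.
Qed.

Lemma dratio_step_le (A : nat -> bool) (a : R) (n : nat) :
  Rabs (dratio A a (S (S n)) - dratio A a (S n)) <=
  Rpower (INR (S (S n))) a / Nsum a (S (S n)).
Proof.
  unfold dratio. rewrite Nsum_S, (Asum_S A a (S n)).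
  apply Rabs_ratio_step_le.
  - split; [apply Asum_nonneg | apply Asum_le_Nsum].
  - apply Nsum_pos.
  - pose proof (Rpower_pos (INR (S (S n))) a).
    destruct (A (S (S n))); lra.
Qed.

Lemma Nsum_ge_count (a c : R) (m n : nat) :
  (m <= n)%nat -> (forall k, (m < k <= n)%nat -> c <= Rpower (INR k) a) ->
  INR (n - m) * c <= Nsum a n.
Proof.
  intros Hmn Hc. induction n as [|n IH].
  - replace (0 - m)%nat with 0%nat by lia. simpl. unfold Nsum. simpl. lra.
  - destruct (Nat.eq_dec m (S n)) as [->|Hm].
    + rewrite Nat.sub_diag. simpl. pose proof (Nsum_pos a n). lra.
    + replace (S n - m)%nat with (S (n - m)) by lia.
      rewrite S_INR, Nsum_S.
      assert (H1 : c <= Rpower (INR (S n)) a) by (apply Hc; lia).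
      assert (H2 : INR (n - m) * c <= Nsum a n).
      { apply IH; [lia | intros k Hk; apply Hc; lia]. }
      lra.
Qed.

Lemma weight_ratio_le_inv (a : R) :
  exists K, forall n, Rpower (INR (S n)) a / Nsum a (S n) <= K / INR (S n).
Proof.
  destruct (Rle_dec a 0) as [Ha|Ha].
  - exists 1. intros n.
    assert (HN : INR (S n - 0) * Rpower (INR (S n)) a <= Nsum a (S n)).
    { apply Nsum_ge_count; [lia|]. intros k Hk.
      apply Rle_Rpower_l_nonpos; [exact Ha|].
      split; [apply lt_0_INR; lia | apply le_INR; lia]. }
    rewrite Nat.sub_0_r in HN.
    apply Rdiv_le_Rdiv_cross; [apply Nsum_pos | apply lt_0_INR; lia | lra].
  - (* every term of the upper half (m, S n], m = S n / 2, is at least (S m)^a *)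
    exists (2 * Rpower 2 a). intros n.
    set (m := (S n / 2)%nat).
    assert (Hm : (2 * m <= S n <= 2 * m + 1)%nat).
    { pose proof (Nat.div_mod (S n) 2 ltac:(lia)).
      pose proof (Nat.mod_upper_bound (S n) 2 ltac:(lia)). unfold m. lia. }
    assert (HSm : 0 < INR (S m)) by (apply lt_0_INR; lia).
    assert (HN : INR (S n - m) * Rpower (INR (S m)) a <= Nsum a (S n)).
    { apply Nsum_ge_count; [lia|]. intros k Hk.
      apply Rle_Rpower_l; [lra|]. split; [exact HSm | apply le_INR; lia]. }
    assert (Hweight : Rpower (INR (S n)) a <= Rpower 2 a * Rpower (INR (S m)) a).
    { rewrite Rpower_mult_distr by lra. apply Rle_Rpower_l; [lra|].
      split; [apply lt_0_INR; lia|].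
      replace 2 with (INR 2) by reflexivity. rewrite <- mult_INR. apply le_INR; lia. }
    assert (Hcount : INR (S n) <= 2 * INR (S n - m)).
    { replace 2 with (INR 2) by reflexivity. rewrite <- mult_INR. apply le_INR; lia. }
    pose proof (Rpower_pos 2 a).
    apply Rdiv_le_Rdiv_cross; [apply Nsum_pos | apply lt_0_INR; lia |].
    apply Rle_trans with (Rpower 2 a * Rpower (INR (S m)) a * (2 * INR (S n - m))).
    { apply Rmult_le_compat; [left; apply Rpower_pos | apply pos_INR | exact Hweight | exact Hcount]. }
    replace (Rpower 2 a * Rpower (INR (S m)) a * (2 * INR (S n - m)))
      with (2 * Rpower 2 a * (INR (S n - m) * Rpower (INR (S m)) a)) by ring.
    apply Rmult_le_compat_l; [lra | exact HN].
Qed.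

Lemma weight_ratio_lim (a : R) :
  is_lim_seq (fun n => Rpower (INR (S n)) a / Nsum a (S n)) 0.
Proof.
  destruct (weight_ratio_le_inv a) as [K HK].
  apply (is_lim_seq_le_le_loc (fun _ => 0) _ (fun n => K * / INR (S n))).
  - exists 0%nat. intros n _. split; [|apply HK].
    left. apply Rdiv_lt_0_compat; [apply Rpower_pos | apply Nsum_pos].
  - apply is_lim_seq_const.
  - replace (Finite 0) with (Rbar_mult K 0) by (simpl; now rewrite Rmult_0_r).
    apply is_lim_seq_scal_l.
    replace (Finite 0) with (Rbar_inv p_infty) by reflexivity.
    apply is_lim_seq_inv; [|discriminate].
    apply (is_lim_seq_incr_1 INR). apply is_lim_seq_INR.
Qed.

Lemma dratio_step_lim (A : nat -> bool) (a : R) :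
  is_lim_seq (fun n => dratio A a (S (S n)) - dratio A a (S n)) 0.
Proof.
  apply is_lim_seq_abs_0.
  apply (is_lim_seq_le_le_loc (fun _ => 0) _
    (fun n => Rpower (INR (S (S n))) a / Nsum a (S (S n)))).
  - exists 0%nat. intros n _. split; [apply Rabs_pos | apply dratio_step_le].
  - apply is_lim_seq_const.
  - exact (proj1 (is_lim_seq_incr_1 _ 0) (weight_ratio_lim a)).
Qed.

Theorem lemma4p1 (alpha : R) (A : nat -> bool) (halpha : -1 <= alpha) :
  forall x : R,
    cluster_point (fun n => dratio A alpha (S n)) x <->
    (Rbar_le (lower_d alpha A) (Finite x) /\ Rbar_le (Finite x) (upper_d alpha A)).
Proof.
  intros x. unfold lower_d, upper_d. split.
  - intros Hc. split.
    + exact (LimInf_seq_le_cluster_point _ _ Hc).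
    + exact (cluster_point_le_LimSup_seq _ _ Hc).
  - intros [Hinf Hsup].
    apply cluster_point_of_vanishing_steps; [apply dratio_step_lim | exact Hinf | exact Hsup].
Qed.
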